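(* Let $n = 3^{n_1}\cdot 4^{n_2}\cdot 5^{n_3}\cdot 7^{n_4}\cdot 8^{n_5}\cdot 11^{n_6}\cdot 23^{n_7}$, where $n_1,\dots,n_7$ are nonnegative integers. Then there exists a quasigroup $(Q,\cdot)$ with $|Q| = n$ satisfying the identity $x\cdot(y\cdot(y\cdot x)) = y$ for all $x,y\in Q$.
   Context: A quasigroup is a set $Q$ with a binary operation $\cdot$ such that for all $a,b\in Q$ each of the equations $a\cdot x = b$ and $y\cdot a = b$ has a unique solution $x\in Q$, resp. $y\in Q$. *)

From mathcomp Require Import all_boot.
Set Implicit Arguments. Unset Strict Implicit. Unset Printing Implicit Defensive.

Definition is_quasigroup (Q : Type) (op : Q -> Q -> Q) : Prop :=
  (forall a b : Q, exists! x : Q, op a x = b) /\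
  (forall a b : Q, exists! y : Q, op y a = b).

(* The quasigroups are affine: on a commutative ring R containing a root b of
   X^5 + X^4 + 1 = (X^2 + X + 1)(X^3 - X + 1), put x.y = b y - b^3 x.  Then
   x.(y.(y.x)) = -(b^5 + b^4) y = y, and b is invertible, with inverse
   -(b^4 + b^3), so all translations are bijective.  Such roots exist in Z_p
   for p = 3, 5, 7, 11, 23, in GF(4) = Z_2[X]/(X^2 + X + 1) and in
   GF(8) = Z_2[X]/(X^3 - X + 1); direct products then give all the orders. *)

From HB Require Import structures.
From mathcomp Require Import all_boot all_algebra ring.

Set Implicit Arguments.
Unset Strict Implicit.
Unset Printing Implicit Defensive.

Import GRing.Theory.

(* The finite and ring structures of R[X]/(h) are not joined in qpoly.v. *)
HB.instance Definition _ (R : finComNzRingType) (h : {poly R}) :=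
  Finite.on {poly %/ h}.

Definition xyyx_law (Q : Type) (op : Q -> Q -> Q) : Prop :=
  forall x y : Q, op x (op y (op y x)) = y.

Definition in_spectrum (n : nat) : Prop :=
  exists (Q : finType) (op : Q -> Q -> Q),
    #|Q| = n /\ is_quasigroup op /\ xyyx_law op.

Lemma in_spectrum1 : in_spectrum 1.
Proof.
exists unit, (fun _ _ => tt); split; first exact: card_unit.
by split=> [|[] []//]; split=> _ []; exists tt; split=> // -[].
Qed.

Section DirectProduct.

Variables (A B : Type) (opA : A -> A -> A) (opB : B -> B -> B).

Let op (x y : A * B) : A * B := (opA x.1 y.1, opB x.2 y.2).

Lemma unique_pair (P : A -> Prop) (Q : B -> Prop) :
  (exists! a, P a) -> (exists! b, Q b) -> exists! z : A * B, P z.1 /\ Q z.2.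
Proof.
move=> [a [Pa aU]] [b [Qb bU]]; exists (a, b); split=> // -[a' b'] /= [Pa' Qb'].
by rewrite (aU _ Pa') (bU _ Qb').
Qed.

Lemma is_quasigroup_prod :
  is_quasigroup opA -> is_quasigroup opB -> is_quasigroup op.
Proof.
move=> [lA rA] [lB rB]; split=> -[a1 a2] [b1 b2].
- have [z [[e1 e2] zU]] := unique_pair (lA a1 b1) (lB a2 b2).
  exists z; split=> [|z' [e1' e2']]; first by rewrite /op e1 e2.
  exact: zU.
- have [z [[e1 e2] zU]] := unique_pair (rA a1 b1) (rB a2 b2).
  exists z; split=> [|z' [e1' e2']]; first by rewrite /op e1 e2.
  exact: zU.
Qed.

Lemma xyyx_law_prod : xyyx_law opA -> xyyx_law opB -> xyyx_law op.
Proof. by move=> lawA lawB [x1 x2] [y1 y2]; rewrite /op /= lawA lawB. Qed.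

End DirectProduct.

Lemma in_spectrumM m n : in_spectrum m -> in_spectrum n -> in_spectrum (m * n).
Proof.
move=> [A [opA [cA [qA lawA]]]] [B [opB [cB [qB lawB]]]].
exists (A * B)%type, (fun x y => (opA x.1 y.1, opB x.2 y.2)).
split; first by rewrite card_prod cA cB.
by split; [exact: is_quasigroup_prod | exact: xyyx_law_prod].
Qed.

Lemma in_spectrumX m e : in_spectrum m -> in_spectrum (m ^ e).
Proof.
move=> sm; elim: e => [|e IHe]; first exact: in_spectrum1.
by rewrite expnS; apply: in_spectrumM.
Qed.

Local Open Scope ring_scope.

Lemma affine_quasigroup (R : comPzRingType) (s t s' t' : R) :
  s' * s = 1 -> t' * t = 1 -> is_quasigroup (fun x y : R => s * x + t * y).
Proof.
move=> ss' tt'.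
have sK z : s' * (s * z) = z by rewrite mulrA ss' mul1r.
have sKV z : s * (s' * z) = z by rewrite mulrA [s * _]mulrC ss' mul1r.
have tK z : t' * (t * z) = z by rewrite mulrA tt' mul1r.
have tKV z : t * (t' * z) = z by rewrite mulrA [t * _]mulrC tt' mul1r.
split=> a c.
- exists (t' * (c - s * a)); split=> [|z /= <-]; first by rewrite tKV addrC subrK.
  by rewrite addrC addKr tK.
- exists (s' * (c - t * a)); split=> [|z /= <-]; first by rewrite sKV subrK.
  by rewrite addrK sK.
Qed.

Section RootOperation.

Variables (R : comPzRingType) (b : R).
Hypothesis b_root : b ^+ 5 + b ^+ 4 + 1 = 0.

Definition root_op (x y : R) : R := - b ^+ 3 * x + b * y.

Lemma root_op_xyyx : xyyx_law root_op.
Proof.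
have e : - (b ^+ 5 + b ^+ 4) = 1 by rewrite -[_ + _](addrK 1) b_root sub0r opprK.
move=> x y; transitivity (- (b ^+ 5 + b ^+ 4) * y); first by rewrite /root_op; ring.
by rewrite e mul1r.
Qed.

Lemma root_op_quasigroup : is_quasigroup root_op.
Proof.
pose c := - (b ^+ 4 + b ^+ 3).
have cb : c * b = 1.
  by rewrite -[1](subr0 1) -b_root /c; ring.
apply: (@affine_quasigroup _ _ _ (- c ^+ 3) c) => //.
by rewrite mulrNN -exprMn cb expr1n.
Qed.

End RootOperation.

Lemma in_spectrum_root (R : finComNzRingType) (b : R) :
  b ^+ 5 + b ^+ 4 + 1 = 0 -> in_spectrum #|R|.
Proof.
move=> b_root; exists R, (root_op b); split=> //.
by split; [exact: root_op_quasigroup | exact: root_op_xyyx].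
Qed.

Section QuotientByMonic.

Variables (R : finComNzRingType) (n : nat) (q : {poly R}).
Hypothesis size_q : (size q <= n.+1)%N.

Lemma size_Xn_add : size ('X^(n.+1) + q) = n.+2.
Proof. by rewrite size_polyDl size_polyXn. Qed.

Lemma monic_Xn_add : 'X^(n.+1) + q \is monic.
Proof. by rewrite monicE lead_coefDl ?size_polyXn ?lead_coefXn. Qed.

Lemma card_qpoly_Xn_add : #|{poly %/ ('X^(n.+1) + q)}| = (#|R| ^ n.+1)%N.
Proof. by rewrite card_monic_qpoly ?size_Xn_add ?monic_Xn_add. Qed.

Lemma in_qpoly_Xn_add : in_qpoly ('X^(n.+1) + q) ('X^(n.+1) + q) = 0.
Proof.
apply: val_inj => /=.
rewrite /mk_monic size_Xn_add monic_Xn_add /=.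
exact: Pdiv.RingMonic.rmodpp monic_Xn_add.
Qed.

End QuotientByMonic.

Section FactorRoots.

Variables (R : comPzRingType) (b : R).

Lemma quadratic_factor_root : b ^+ 2 + (b + 1) = 0 -> b ^+ 5 + b ^+ 4 + 1 = 0.
Proof.
by move=> b2; rewrite -(mul0r (b ^+ 3 + (1 - b))) -b2; ring.
Qed.

Lemma cubic_factor_root : b ^+ 3 + (1 - b) = 0 -> b ^+ 5 + b ^+ 4 + 1 = 0.
Proof.
by move=> b3; rewrite -(mulr0 (b ^+ 2 + (b + 1))) -b3; ring.
Qed.

End FactorRoots.

Local Notation GF4 := {poly %/ ('X^2 + ('X + 1) : {poly 'Z_2})}.
Local Notation GF8 := {poly %/ ('X^3 + (1 - 'X) : {poly 'Z_2})}.

Fact size_GF4_tail : (size ('X + 1 : {poly 'Z_2})%R <= 2)%N.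
Proof. by rewrite size_XaddC. Qed.

Fact size_GF8_tail : (size (1 - 'X : {poly 'Z_2})%R <= 3)%N.
Proof. by rewrite -opprB size_polyN -polyC1 size_XsubC. Qed.

Lemma GF4_root : ('qX : GF4) ^+ 5 + 'qX ^+ 4 + 1 = 0.
Proof.
apply: quadratic_factor_root.
have /= := in_qpoly_Xn_add size_GF4_tail.
by rewrite !rmorphD rmorphXn rmorph1.
Qed.

Lemma GF8_root : ('qX : GF8) ^+ 5 + 'qX ^+ 4 + 1 = 0.
Proof.
apply: cubic_factor_root.
have /= := in_qpoly_Xn_add size_GF8_tail.
by rewrite !rmorphD rmorphN rmorphXn rmorph1.
Qed.

Lemma in_spectrum_Zp p (b : 'Z_p) :
  (1 < p)%N -> b ^+ 5 + b ^+ 4 + 1 = 0 -> in_spectrum p.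
Proof. by move=> p_gt1 /in_spectrum_root; rewrite card_ord Zp_cast. Qed.

Lemma in_spectrum3 : in_spectrum 3.
Proof. by apply: (@in_spectrum_Zp _ 1) => //; apply/eqP; vm_compute. Qed.

Lemma in_spectrum5 : in_spectrum 5.
Proof. by apply: (@in_spectrum_Zp _ 3%:R) => //; apply/eqP; vm_compute. Qed.

Lemma in_spectrum7 : in_spectrum 7.
Proof. by apply: (@in_spectrum_Zp _ 2%:R) => //; apply/eqP; vm_compute. Qed.

Lemma in_spectrum11 : in_spectrum 11.
Proof. by apply: (@in_spectrum_Zp _ 5%:R) => //; apply/eqP; vm_compute. Qed.

Lemma in_spectrum23 : in_spectrum 23.
Proof. by apply: (@in_spectrum_Zp _ 13%:R) => //; apply/eqP; vm_compute. Qed.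

Lemma in_spectrum4 : in_spectrum 4.
Proof.
have := in_spectrum_root GF4_root.
by rewrite (card_qpoly_Xn_add size_GF4_tail) card_ord.
Qed.

Lemma in_spectrum8 : in_spectrum 8.
Proof.
have := in_spectrum_root GF8_root.
by rewrite (card_qpoly_Xn_add size_GF8_tail) card_ord.
Qed.

Local Close Scope ring_scope.

Theorem mainTheorem1 (n1 n2 n3 n4 n5 n6 n7 : nat) :
  let n := 3 ^ n1 * 4 ^ n2 * 5 ^ n3 * 7 ^ n4 * 8 ^ n5 * 11 ^ n6 * 23 ^ n7 in
  exists (Q : finType) (op : Q -> Q -> Q),
    #|Q| = n /\ is_quasigroup op /\
    (forall x y : Q, op x (op y (op y x)) = y).
Proof.
move=> n; change (in_spectrum n).
by repeat apply: in_spectrumM; apply: in_spectrumX;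
  [ exact: in_spectrum3 | exact: in_spectrum4 | exact: in_spectrum5
  | exact: in_spectrum7 | exact: in_spectrum8 | exact: in_spectrum11
  | exact: in_spectrum23 ].
Qed.
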